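(* For every $\rho\in(0,1)$ there exists an instance of the service-chain computing network model (a network $\mathcal{G}$, applications with single-task chains, increasing convex continuously differentiable cost functions $D_{ij}$, $C_i$, and input rates $\boldsymbol{r}$) together with a feasible strategy $\boldsymbol{\phi}\in\mathcal{D}_{\boldsymbol{\phi}}(\boldsymbol{r})$ that satisfies the KKT condition $$\frac{\partial T}{\partial \phi_{ij}(a,k)} \begin{cases} = \min_{j'\in\{0\}\cup\mathcal{V}} \frac{\partial T}{\partial \phi_{ij'}(a,k)}, & \text{if } \phi_{ij}(a,k)>0,\\ \geq \min_{j'\in\{0\}\cup\mathcal{V}} \frac{\partial T}{\partial \phi_{ij'}(a,k)}, & \text{if } \phi_{ij}(a,k)=0\end{cases}$$ for all $i,j,(a,k)$, such that $T(\boldsymbol{\phi}^* )/T(\boldsymbol{\phi})=\rho$, where $\boldsymbol{\phi}^*$ is a global optimal solution of $\min_{\boldsymbol{\phi}\in\mathcal{D}_{\boldsymbol{\phi}}(\boldsymbol{r})}T(\boldsymbol{\phi})$.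
   Context: Service-chain computing network model. $\mathcal{G}=(\mathcal{V},\mathcal{E})$ is a directed, strongly connected graph whose links are bidirectional ($(i,j)\in\mathcal{E}\Rightarrow(j,i)\in\mathcal{E}$). $\mathcal{A}$ is a finite set of applications; application $a$ has a destination $d_a\in\mathcal{V}$ and a chain of $|\mathcal{T}_a|$ tasks performed in order. The set of stages is $\mathcal{S}=\{(a,k): a\in\mathcal{A}, k=0,1,\dots,|\mathcal{T}_a|\}$; stage $(a,k)$ denotes packets that have completed the first $k$ tasks of $a$, and has packet size $L_{(a,k)}>0$. Exogenous input rates are $r_i(a)\ge 0$ (stage $(a,0)$ packets injected at node $i$), $\boldsymbol{r}=[r_i(a)]$. The forwarding strategy $\boldsymbol{\phi}=[\phi_{ij}(a,k)]_{(a,k)\in\mathcal{S},i\in\mathcal{V},j\in\{0\}\cup\mathcal{V}}$ has $\phi_{ij}(a,k)\in[0,1]$; for $j\in\mathcal{V}$ it is the fraction of node $i$'s stage-$(a,k)$ traffic sent to node $j$ (with $\phi_{ij}(a,k)=0$ if $(i,j)\notin\mathcal{E}$), and $\phi_{i0}(a,k)$ is the fraction sent to $i$'s local processor, which converts each stage-$(a,k)$ packet into one stage-$(a,k+1)$ packet; $\phi_{i0}(a,|\mathcal{T}_a|)=0$. Flow conservation: $\sum_{j\in\{0\}\cup\mathcal{V}}\phi_{ij}(a,k)=0$ if $k=|\mathcal{T}_a|$ and $i=d_a$, and $=1$ otherwise. Traffic $t_i(a,k)$ satisfies $t_i(a,0)=\sum_{j\in\mathcal{V}}t_j(a,0)\phi_{ji}(a,0)+r_i(a)$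 and, for $k\ge1$, $t_i(a,k)=\sum_{j\in\mathcal{V}}t_j(a,k)\phi_{ji}(a,k)+t_i(a,k-1)\phi_{i0}(a,k-1)$. Link flows $f_{ij}(a,k)=t_i(a,k)\phi_{ij}(a,k)$, processor inputs $g_i(a,k)=t_i(a,k)\phi_{i0}(a,k)$, total link flow $F_{ij}=\sum_{(a,k)\in\mathcal{S}}L_{(a,k)}f_{ij}(a,k)$, computation workload $G_i=\sum_{(a,k)\in\mathcal{S}}w_i(a,k)g_i(a,k)$ with weights $w_i(a,k)>0$. Link costs $D_{ij}(\cdot)$ and computation costs $C_i(\cdot)$ are increasing, continuously differentiable, convex functions (possibly taking value $+\infty$ outside a domain). Total cost $T(\boldsymbol{\phi})=\sum_{(i,j)\in\mathcal{E}}D_{ij}(F_{ij})+\sum_{i\in\mathcal{V}}C_i(G_i)$. The feasible set $\mathcal{D}_{\boldsymbol{\phi}}(\boldsymbol{r})$ consists of $\boldsymbol{\phi}$ satisfying flow conservation with all $D_{ij}(F_{ij})<\infty$ and $C_i(G_i)<\infty$. Marginal quantities: $\partial T/\partial t_i(a,k)$ is the marginal total cost of an additional exogenous injection of stage-$(a,k)$ traffic at node $i$ (with $\boldsymbol{\phi}$ fixed); it satisfies $\partial T/\partial t_{d_a}(a,|\mathcal{T}_a|)=0$, for $k=|\mathcal{T}_a|$: $\frac{\partial T}{\partial t_i(a,k)}=\sum_{j\in\mathcal{V}}\phi_{ij}(a,k)\big(L_{(a,k)}D'_{ij}(F_{ij})+\frac{\partial T}{\partial t_j(a,k)}\big)$,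 and for $k<|\mathcal{T}_a|$: $\frac{\partial T}{\partial t_i(a,k)}=\phi_{i0}(a,k)\big(w_i(a,k)C'_i(G_i)+\frac{\partial T}{\partial t_i(a,k+1)}\big)+\sum_{j\in\mathcal{V}}\phi_{ij}(a,k)\big(L_{(a,k)}D'_{ij}(F_{ij})+\frac{\partial T}{\partial t_j(a,k)}\big)$. The partial derivatives of $T$ are $\frac{\partial T}{\partial\phi_{ij}(a,k)}=t_i(a,k)\big(L_{(a,k)}D'_{ij}(F_{ij})+\frac{\partial T}{\partial t_j(a,k)}\big)$ for $(i,j)\in\mathcal{E}$, $\frac{\partial T}{\partial\phi_{i0}(a,k)}=t_i(a,k)\big(w_i(a,k)C'_i(G_i)+\frac{\partial T}{\partial t_i(a,k+1)}\big)$ for $k<|\mathcal{T}_a|$, and by convention $\partial T/\partial\phi_{ij}(a,k)=\infty$ for $(i,j)\notin\mathcal{E}$ and $\partial T/\partial\phi_{i0}(a,|\mathcal{T}_a|)=\infty$. *)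

From HB Require Import structures.
From mathcomp Require Import all_boot all_order all_algebra.
From mathcomp Require Import all_classical all_reals all_analysis.
Set Implicit Arguments. Unset Strict Implicit. Unset Printing Implicit Defensive.
Import Order.TTheory GRing.Theory Num.Theory.
Import numFieldNormedType.Exports.
Local Open Scope ring_scope.

(* A stage (a,k) is encoded by a : A and k : nat with k <= tlen a.
   The processor index "0" of the paper is encoded as [None : option V],
   node j is encoded as [Some j]. *)
Record network (R : realType) (V A : finType) := Network {
  edge  : rel V;
  dest  : A -> V;
  tlen  : A -> nat;
  psize : A -> nat -> R;
  wgt   : V -> A -> nat -> R;
  Dcost : V -> V -> R -> R;
  Ccost : V -> R -> R;
  rate  : V -> A -> R
}.

Section Model.
Variables (R : realType) (V A : finType) (N : network R V A).

Definition cost_fun (f : R -> R) : Prop :=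
  (forall x y, x < y -> f x < f y) /\
  (forall x y (l : R), 0 <= l <= 1 ->
      f (l * x + (1 - l) * y) <= l * f x + (1 - l) * f y) /\
  (forall x, derivable f x 1) /\
  continuous (derive1 f).

Definition wf_network : Prop :=
  (forall i j, edge N i j -> edge N j i) /\
  (forall i j, connect (edge N) i j) /\
  (forall a k, (k <= tlen N a)%N -> 0 < psize N a k) /\
  (forall i a k, (k <= tlen N a)%N -> 0 < wgt N i a k) /\
  (forall i a, 0 <= rate N i a) /\
  (forall i j, edge N i j -> cost_fun (Dcost N i j)) /\
  (forall i, cost_fun (Ccost N i)).

Definition strategy := A -> nat -> V -> option V -> R.
Definition nodefun := V -> A -> nat -> R.

(* flow conservation (the feasible set D_phi(r); all costs are finite-valued) *)
Definition feasible (phi : strategy) : Prop :=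
  (forall a k i j, (k <= tlen N a)%N -> 0 <= phi a k i j <= 1) /\
  (forall a k i j, (k <= tlen N a)%N -> ~~ edge N i j -> phi a k i (Some j) = 0) /\
  (forall a i, phi a (tlen N a) i None = 0) /\
  (forall a k i, (k <= tlen N a)%N ->
     \sum_(j : option V) phi a k i j =
       if (k == tlen N a) && (i == dest N a) then 0 else 1).

Definition traffic_sol (phi : strategy) (t : nodefun) : Prop :=
  (forall i a k, (k <= tlen N a)%N -> 0 <= t i a k) /\
  (forall i a, t i a 0%N = \sum_(j : V) t j a 0%N * phi a 0%N j (Some i) + rate N i a) /\
  (forall i a k, (k.+1 <= tlen N a)%N ->
     t i a k.+1 = \sum_(j : V) t j a k.+1 * phi a k.+1 j (Some i)
                  + t i a k * phi a k i None).

Definition traffic_unique (phi : strategy) (t : nodefun) : Prop :=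
  forall t', traffic_sol phi t' ->
    forall i a k, (k <= tlen N a)%N -> t' i a k = t i a k.

Definition Fflow (phi : strategy) (t : nodefun) (i j : V) : R :=
  \sum_(a : A) \sum_(k < (tlen N a).+1) psize N a k * (t i a k * phi a k i (Some j)).

Definition Gload (phi : strategy) (t : nodefun) (i : V) : R :=
  \sum_(a : A) \sum_(k < (tlen N a).+1) wgt N i a k * (t i a k * phi a k i None).

Definition totalcost (phi : strategy) (t : nodefun) : R :=
  \sum_(i : V) \sum_(j : V | edge N i j) Dcost N i j (Fflow phi t i j)
  + \sum_(i : V) Ccost N i (Gload phi t i).

(* m i a k = dT/dt_i(a,k): solution of the marginal-cost equations *)
Definition marginal_sol (phi : strategy) (t : nodefun) (m : nodefun) : Prop :=
  (forall a, m (dest N a) a (tlen N a) = 0) /\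
  (forall i a, m i a (tlen N a) =
     \sum_(j : V) phi a (tlen N a) i (Some j) *
        (psize N a (tlen N a) * derive1 (Dcost N i j) (Fflow phi t i j) + m j a (tlen N a))) /\
  (forall i a k, (k < tlen N a)%N ->
     m i a k =
       phi a k i None * (wgt N i a k * derive1 (Ccost N i) (Gload phi t i) + m i a k.+1)
     + \sum_(j : V) phi a k i (Some j) *
        (psize N a k * derive1 (Dcost N i j) (Fflow phi t i j) + m j a k)).

Definition marginal_unique (phi : strategy) (t : nodefun) (m : nodefun) : Prop :=
  forall m', marginal_sol phi t m' ->
    forall i a k, (k <= tlen N a)%N -> m' i a k = m i a k.

(* dT/dphi_ij(a,k), with value +oo by convention for non-edges and for the
   processor at the last stage *)
Definition dTdphi (phi : strategy) (t m : nodefun) (a : A) (k : nat) (i : V)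
    (j : option V) : \bar R :=
  match j with
  | Some j => if edge N i j then
                (t i a k * (psize N a k * derive1 (Dcost N i j) (Fflow phi t i j) + m j a k))%:E
              else +oo%E
  | None => if (k < tlen N a)%N then
              (t i a k * (wgt N i a k * derive1 (Ccost N i) (Gload phi t i) + m i a k.+1))%:E
            else +oo%E
  end.

Definition KKT (phi : strategy) (t m : nodefun) : Prop :=
  forall a k i (j : option V), (k <= tlen N a)%N ->
    let mn := \big[Order.min/+oo%E]_(j' : option V) dTdphi phi t m a k i j' in
    (0 < phi a k i j -> dTdphi phi t m a k i j = mn) /\
    (phi a k i j = 0 -> (mn <= dTdphi phi t m a k i j)%E).

Definition global_opt (phistar : strategy) (tstar : nodefun) : Prop :=
  feasible phistar /\ traffic_sol phistar tstar /\
  forall phi' t', feasible phi' -> traffic_sol phi' t' ->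
    totalcost phistar tstar <= totalcost phi' t'.

End Model.

From HB Require Import structures.
From mathcomp Require Import all_boot all_order all_algebra.
From mathcomp Require Import all_classical all_reals all_analysis.
From mathcomp Require Import ring lra.
Set Implicit Arguments. Unset Strict Implicit. Unset Printing Implicit Defensive.
Import Order.TTheory GRing.Theory Num.Theory.
Local Open Scope ring_scope.

(** Node [true] is the source s, where requests enter at unit rate and
    processing costs K per unit; node [false] is the destination d, where
    processing costs 1; both links cost 1 per unit.  Processing at s and
    shipping the result costs 1 + K, whereas shipping the request to d and
    processing there costs 2, which is optimal as soon as K >= 1.  Yet the
    strategy processing at s is a KKT point: d, which carries no stage-0
    traffic, is told to send stage-0 packets back to s, so the KKT
    conditions at d hold vacuously while the resulting marginal cost K + 2 of
    stage-0 traffic at d makes forwarding from s look worse than processing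
    there.  With K = 2/rho - 1 the cost ratio 2/(1 + K) is rho. *)

Lemma big_option (R : Type) (idx : R) (op : R -> R -> R) (T : finType)
    (F : option T -> R) :
  \big[op/idx]_(j : option T) F j = op (F None) (\big[op/idx]_(j : T) F (Some j)).
Proof.
by rewrite ![index_enum _]unlock Finite.enum.unlock /= big_cons big_map Finite.enum.unlock.
Qed.

Lemma big_unit (R : Type) (idx : R) (op : Monoid.law idx) (F : unit -> R) :
  \big[op/idx]_(j : unit) F j = F tt.
Proof.
by rewrite ![index_enum _]unlock Finite.enum.unlock /= big_cons big_nil Monoid.mulm1.
Qed.

Lemma big_ord2 (R : Type) (idx : R) (op : Monoid.law idx) (F : 'I_2 -> R) :
  \big[op/idx]_(k < 2) F k = op (F ord0) (F ord_max).
Proof. by rewrite big_ord_recr big_ord1; congr (op (F _) (F _)); apply: val_inj. Qed.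

Section LinearCost.
Variable R : realType.

Definition linear_cost (c : R) : R -> R := fun z => c * z.

Lemma derivable_linear_cost (c x : R) : derivable (linear_cost c) x 1.
Proof. exact: derivableM. Qed.

Lemma derive1_linear_cost (c x : R) : derive1 (linear_cost c) x = c.
Proof. by rewrite derive1Ml // derive1_id mulr1. Qed.

Lemma cost_fun_linear (c : R) : 0 < c -> cost_fun (linear_cost c).
Proof.
move=> c_gt0; split; [|split; [|split]].
- by move=> x y; rewrite /linear_cost ltr_pM2l.
- by move=> x y l _; rewrite /linear_cost mulrDr !mulrA [c * l]mulrC [c * (1 - l)]mulrC.
- exact: derivable_linear_cost.
- have -> : derive1 (linear_cost c) = cst c.
    by apply: funext => x; rewrite derive1_linear_cost.
  by move=> x; apply: cvg_cst.
Qed.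

End LinearCost.

Section TwoNodeNetwork.
Variables (R : realType) (K : R).
Hypothesis K_gt1 : 1 < K.

Definition two_node_net : network R bool unit :=
  @Network R bool unit (fun i j : bool => i != j) (fun _ => false) (fun _ => 1%N)
    (fun _ _ => 1) (fun _ _ _ => 1) (fun _ _ => linear_cost 1)
    (fun i => linear_cost (if i then K else 1)) (fun i _ => if i then 1 else 0).

Lemma two_node_net_wf : wf_network two_node_net.
Proof.
have K_gt0 : 0 < K := lt_trans ltr01 K_gt1.
split; first by move=> i j /=; rewrite eq_sym.
split; first by move=> [] [] //=; rewrite ?connect0 //; apply: connect1.
split; first by move=> *; apply: ltr01.
split; first by move=> *; apply: ltr01.
split; first by move=> [] _ /=; lra.
split; first by move=> i j _; apply/cost_fun_linear/ltr01.
by move=> [] /=; apply: cost_fun_linear.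
Qed.

Lemma totalcost_two_node (phi : strategy R bool unit) (t : nodefun R bool unit) :
  totalcost two_node_net phi t =
    t true tt 0%N * (phi tt 0%N true (Some false) + K * phi tt 0%N true None)
  + t true tt 1%N * (phi tt 1%N true (Some false) + K * phi tt 1%N true None)
  + t false tt 0%N * (phi tt 0%N false (Some true) + phi tt 0%N false None)
  + t false tt 1%N * (phi tt 1%N false (Some true) + phi tt 1%N false None).
Proof.
rewrite /totalcost /Fflow /Gload /= !big_bool /= !big_mkcond /= !big_bool /=.
rewrite (big_mkcond (fun j => false != j)) /= !big_bool /= !big_unit !big_ord2.
rewrite /linear_cost /=; ring.
Qed.

Lemma feasible_two_node_stage0 (phi : strategy R bool unit) :
  feasible two_node_net phi ->
  phi tt 0%N true (Some false) + phi tt 0%N true None = 1 /\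
  phi tt 0%N false (Some true) + phi tt 0%N false None = 1.
Proof.
move=> [_ [phi_edge [_ phi_sum]]].
have := phi_sum tt 0%N true isT; have := phi_sum tt 0%N false isT.
rewrite !big_option !big_bool /= ?(phi_edge tt 0%N true true) ?(phi_edge tt 0%N false false) //.
move=> sum_false sum_true; split; lra.
Qed.

Lemma feasible_two_node_stage1 (phi : strategy R bool unit) :
  feasible two_node_net phi ->
  [/\ phi tt 1%N true (Some false) = 1, phi tt 1%N true None = 0,
      phi tt 1%N false (Some true) = 0 & phi tt 1%N false None = 0].
Proof.
move=> [phi01 [phi_edge [phi_last phi_sum]]].
have := phi_sum tt 1%N true isT; have := phi_sum tt 1%N false isT.
rewrite !big_option !big_bool /= ?(phi_edge tt 1%N true true) ?(phi_edge tt 1%N false false) //.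
rewrite !phi_last => sum_false sum_true.
have [u1_ge0 _] := andP (phi01 tt 1%N false (Some true) isT).
have [v1_ge0 _] := andP (phi01 tt 1%N false None isT).
split; lra.
Qed.

Lemma traffic_sol_two_node (phi : strategy R bool unit) (t : nodefun R bool unit) :
  feasible two_node_net phi -> traffic_sol two_node_net phi t ->
  [/\ t true tt 0%N = t false tt 0%N * phi tt 0%N false (Some true) + 1,
      t false tt 0%N = t true tt 0%N * phi tt 0%N true (Some false),
      t true tt 1%N = t false tt 1%N * phi tt 1%N false (Some true)
                      + t true tt 0%N * phi tt 0%N true None &
      t false tt 1%N = t true tt 1%N * phi tt 1%N true (Some false)
                       + t false tt 0%N * phi tt 0%N false None].
Proof.
move=> [_ [phi_edge _]] [_ [t_stage0 t_stage1]].
have noloop k i : (k <= 1)%N -> phi tt k i (Some i) = 0.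
  by move=> k_le1; apply: phi_edge; rewrite //= eqxx.
have := t_stage0 true tt; have := t_stage0 false tt.
have := t_stage1 true tt 0%N isT; have := t_stage1 false tt 0%N isT.
rewrite !big_bool /= !noloop //= !mulr0 !add0r !addr0.
by move=> y1 x1 y0 x0; split.
Qed.

Lemma totalcost_ge2 (phi : strategy R bool unit) (t : nodefun R bool unit) :
  feasible two_node_net phi -> traffic_sol two_node_net phi t ->
  2 <= totalcost two_node_net phi t.
Proof.
move=> feas tsol; have [phi01 _] := feas; have [t_ge0 _] := tsol.
have [sum_true sum_false] := feasible_two_node_stage0 feas.
have [x0 y0 x1 _] := traffic_sol_two_node feas tsol.
rewrite totalcost_two_node.
have [p1 q1 u1 v1] := feasible_two_node_stage1 feas.
rewrite p1 q1 u1 v1 in x1 *.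
set X0 := t true tt 0%N in x0 y0 x1 *; set Y0 := t false tt 0%N in x0 y0 x1 *.
set p := phi tt 0%N true (Some false) in sum_true y0 *.
set q := phi tt 0%N true None in sum_true x1 *.
have X0_ge0 : 0 <= X0 by apply: t_ge0.
have Y0_ge0 : 0 <= Y0 by apply: t_ge0.
have [q_ge0 _] := andP (phi01 tt 0%N true None isT).
have [u_ge0 _] := andP (phi01 tt 0%N false (Some true) isT).
have X0_ge1 : 1 <= X0 by rewrite x0 lerDr mulr_ge0.
have Kq_ge_q : X0 * q <= X0 * (K * q).
  by rewrite ler_wpM2l // ler_peMl //; apply: ltW.
rewrite sum_false x1 y0 (_ : p = 1 - q); last by lra.
nra.
Qed.

Definition phi_local : strategy R bool unit := fun _ k i j =>
  match k, i, j with
  | 0%N, true, None | 0%N, false, Some true | 1%N, true, Some false => 1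
  | _, _, _ => 0
  end.

Definition t_local : nodefun R bool unit := fun i _ k =>
  match k, i with 0%N, false => 0 | _, _ => 1 end.

Definition m_local : nodefun R bool unit := fun i _ k =>
  match k, i with
  | 0%N, true => K + 1 | 0%N, false => K + 2 | 1%N, true => 1 | _, _ => 0
  end.

Definition phi_offload : strategy R bool unit := fun _ k i j =>
  match k, i, j with
  | 0%N, true, Some false | 0%N, false, None | 1%N, true, Some false => 1
  | _, _, _ => 0
  end.

Definition t_offload : nodefun R bool unit := fun i _ k =>
  match k, i with 1%N, true => 0 | _, _ => 1 end.

Lemma feasible_local : feasible two_node_net phi_local.
Proof.
split; first by move=> a [|[|k]] [] [[]|] //= _; lra.
split; first by move=> a [|[|k]] [] [].
split; first by move=> a [].
by move=> a [|[|k]] [] //= _; rewrite big_option big_bool /=; lra.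
Qed.

Lemma feasible_offload : feasible two_node_net phi_offload.
Proof.
split; first by move=> a [|[|k]] [] [[]|] //= _; lra.
split; first by move=> a [|[|k]] [] [].
split; first by move=> a [].
by move=> a [|[|k]] [] //= _; rewrite big_option big_bool /=; lra.
Qed.

Lemma traffic_sol_local : traffic_sol two_node_net phi_local t_local.
Proof.
split; first by move=> [] a [|[|k]] //= _; lra.
split; first by move=> [] a; rewrite big_bool /=; lra.
by move=> [] a [|k] //= _; rewrite big_bool /=; lra.
Qed.

Lemma traffic_sol_offload : traffic_sol two_node_net phi_offload t_offload.
Proof.
split; first by move=> [] a [|[|k]] //= _; lra.
split; first by move=> [] a; rewrite big_bool /=; lra.
by move=> [] a [|k] //= _; rewrite big_bool /=; lra.
Qed.

Lemma traffic_unique_local : traffic_unique two_node_net phi_local t_local.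
Proof.
move=> t tsol i [] k k_le1.
have [/= x0 y0 x1 y1] := traffic_sol_two_node feasible_local tsol.
by case: i; case: k k_le1 => [|[|k]] //= _; lra.
Qed.

Lemma marginal_sol_local : marginal_sol two_node_net phi_local t_local m_local.
Proof.
split; first by [].
split; first by move=> [] [] /=; rewrite big_bool /= ?derive1_linear_cost; lra.
by move=> [] [] [|k] //= _; rewrite big_bool /= ?derive1_linear_cost; lra.
Qed.

Lemma marginal_unique_local : marginal_unique two_node_net phi_local t_local m_local.
Proof.
move=> m [m_dest [m_last m_stage]] i [] k k_le1.
have := m_dest tt; have := m_last true tt.
have := m_stage true tt 0%N isT; have := m_stage false tt 0%N isT.
rewrite /= !big_bool /= ?derive1_linear_cost => y0 x0 x1 y1.
by case: i; case: k k_le1 => [|[|k]] //= _; lra.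
Qed.

Lemma KKT_local : KKT two_node_net phi_local t_local m_local.
Proof.
move=> [] [|[|k]] i j //= _; case: i; case: j => [[]|];
  (split; [move=> phi_gt0 | move=> _; exact: bigmin_le]);
  try by move: phi_gt0; rewrite /= ltxx.
all: apply/eqP; rewrite eq_le bigmin_le andbT.
all: apply: le_bigmin => [|j' _]; first by rewrite leey.
all: case: j' => [[]|]; rewrite /dTdphi /= ?derive1_linear_cost ?leey ?lee_fin //; lra.
Qed.

Lemma totalcost_local : totalcost two_node_net phi_local t_local = 1 + K.
Proof. by rewrite totalcost_two_node /=; lra. Qed.

Lemma totalcost_offload : totalcost two_node_net phi_offload t_offload = 2.
Proof. by rewrite totalcost_two_node /=; lra. Qed.

Lemma global_opt_offload : global_opt two_node_net phi_offload t_offload.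
Proof.
split; first exact: feasible_offload.
split; first exact: traffic_sol_offload.
by move=> phi t feas tsol; rewrite totalcost_offload; apply: totalcost_ge2.
Qed.

End TwoNodeNetwork.

Theorem proposition1 (R : realType) (rho : R) :
  0 < rho < 1 ->
  exists (V A : finType) (N : network R V A),
    wf_network N /\ (forall a, tlen N a = 1%N) /\
    exists (phi : strategy R V A) (t m : nodefun R V A),
      feasible N phi /\ traffic_sol N phi t /\ traffic_unique N phi t /\
      marginal_sol N phi t m /\ marginal_unique N phi t m /\
      KKT N phi t m /\
      exists (phistar : strategy R V A) (tstar : nodefun R V A),
        global_opt N phistar tstar /\
        totalcost N phistar tstar / totalcost N phi t = rho.
Proof.
move=> /andP[rho_gt0 rho_lt1].
have K_gt1 : 1 < 2 / rho - 1 by rewrite ltrBrDr ltr_pdivlMr //; lra.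
exists bool, unit, (two_node_net (2 / rho - 1)); split; first exact: two_node_net_wf.
split; first by [].
exists (phi_local R), (t_local R), (m_local (2 / rho - 1)).
split; first exact: feasible_local.
split; first exact: traffic_sol_local.
split; first exact: traffic_unique_local.
split; first exact: marginal_sol_local.
split; first exact: marginal_unique_local.
split; first exact: KKT_local.
exists (phi_offload R), (t_offload R); split; first exact: global_opt_offload.
rewrite totalcost_offload totalcost_local addrC subrK.
by field; rewrite gt_eqF.
Qed.
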